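(* Let $C\subseteq\mathbb{F}_2^n$ be a code. Then (1) $\displaystyle \mathrm{PUD}(C)\le 1-\frac{1}{|C|}\sum_{j=0}^n W^{\mathrm{H}}_j(C)\sum_{i=0}^n(1-q)^i(1-p)^{n-i}\sum_{s\in\mathcal S\left(\frac{\delta(C)+(\gamma-1)(i-j)}{2}\right)}\left(\frac{q}{1-p}\right)^s\lambda(i,j,s)$; (2) $\displaystyle \mathrm{PUD}(C)\le 1-\frac{1}{|C|}\sum_{j=0}^n W^{\mathrm{H}}_j(C)\sum_{i=0}^n(1-q)^i(1-p)^{n-i}\sum_{s\in\mathcal S\left(\frac{\hat\delta(C)+i(\gamma-1)}{2}\right)}\left(\frac{q}{1-p}\right)^s\lambda(i,j,s)$.
   Context: Let $n\ge2$ and fix reals $0<p\le q<1/2$. Let $\mathbb{P}^n(y\mid x)=\prod_{i=1}^n\mathbb{P}(y_i\mid x_i)$ where $\mathbb{P}(1\mid0)=p$, $\mathbb{P}(0\mid0)=1-p$, $\mathbb{P}(0\mid1)=q$, $\mathbb{P}(1\mid1)=1-q$. Let $\gamma:=\log_{q/(1-p)}\left(\frac{p}{1-q}\right)$. For $x\in\mathbb{F}_2^n$, $\omega^{\mathrm{H}}(x)=|\{i:x_i=1\}|$; for $a,b\in\{0,1\}$, $d_{ab}(y,x)=|\{i: y_i=a,\ x_i=b\}|$. Discrepancy: $\delta(y,x):=\gamma\,d_{10}(y,x)+d_{01}(y,x)$; symmetric discrepancy: $\hat\delta(y,x):=\delta(y,x)-\omega^{\mathrm{H}}(y)(\gamma-1)$.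 A code is $C\subseteq\mathbb{F}_2^n$ with $|C|\ge2$; $\delta(C)=\min\{\delta(x,x'):x,x'\in C,\ x\ne x'\}$, $\hat\delta(C)=\min\{\hat\delta(x,x'):x,x'\in C,\ x\ne x'\}$. $W^{\mathrm{H}}_j(C)$ is the number of codewords of Hamming weight $j$. The maximum likelihood decoder $D_C$ sends $y$ to $x$ if $x$ is the unique codeword maximizing $\mathbb{P}^n(y\mid x)$ and to a failure symbol $\mathbf f\notin\mathbb{F}_2^n$ otherwise; $\mathrm{PUD}(C):=\frac{1}{|C|}\sum_{x\in C}\sum_{y\in\mathbb{F}_2^n,\ D_C(y)\ne x}\mathbb{P}^n(y\mid x)$. Let $\mathcal S:=\{a+\gamma b:a,b\in\mathbb N\}$ and $\mathcal S(h):=\{s\in\mathcal S: 0\le s<h\}$. For real $a,b$, $\mathrm{Bin}(a,b)=\binom ab$ if $a,b\in\mathbb N$ and $0$ otherwise, and $\lambda(i,j,s):=\mathrm{Bin}\!\left(j,\frac{i\gamma-s+j}{\gamma+1}\right)\mathrm{Bin}\!\left(n-j,\frac{s-j+i}{\gamma+1}\right)$ (this equals the number of $y$ of weight $i$ with $\delta(y,x)=s$ for any fixed $x$ of weight $j$). *)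

From HB Require Import structures.
From mathcomp Require Import all_boot all_order all_algebra.
From mathcomp Require Import reals exp.
Set Implicit Arguments. Unset Strict Implicit. Unset Printing Implicit Defensive.
Import Order.TTheory GRing.Theory Num.Theory.
Local Open Scope ring_scope.

Section BinaryAsymmetricChannel.
Variable R : realType.
Variable n : nat.
Variables p q : R.

(* F_2^n : binary words of length n, a word is a function 'I_n -> bool
   (false = 0, true = 1). *)
Definition word := {ffun 'I_n -> bool}.

(* single-letter channel P(a | b): output a given input b *)
Definition chP (a b : bool) : R :=
  match b, a with
  | false, true => p
  | false, false => 1 - p
  | true, false => q
  | true, true => 1 - q
  end.

Definition Pn (y x : word) : R := \prod_(i < n) chP (y i) (x i).

Definition gam : R := ln (p / (1 - q)) / ln (q / (1 - p)).

Definition wtH (x : word) : nat := #|[set i | x i]|.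

Definition dab (a b : bool) (y x : word) : nat :=
  #|[set i | (y i == a) && (x i == b)]|.

Definition disc (y x : word) : R :=
  gam * (dab true false y x)%:R + (dab false true y x)%:R.
Definition sdisc (y x : word) : R :=
  disc y x - (wtH y)%:R * (gam - 1).

Definition dpairs (C : {set word}) : seq (word * word) :=
  [seq u <- [seq (x, x') | x <- enum C, x' <- enum C] | u.1 != u.2].

Definition minseq (s : seq R) : R := \big[Num.min/head 0 s]_(r <- s) r.

Definition discC (C : {set word}) : R :=
  minseq [seq disc u.1 u.2 | u <- dpairs C].
Definition sdiscC (C : {set word}) : R :=
  minseq [seq sdisc u.1 u.2 | u <- dpairs C].

Definition WH (C : {set word}) (j : nat) : nat := #|[set x in C | wtH x == j]|.

(* Maximum likelihood decoder: Some x if x is the unique codeword maximizing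
   P^n(y | .), None (the failure symbol f) otherwise. *)
Definition mldec (C : {set word}) (y : word) : option word :=
  [pick x in C | [forall x', (x' \in C) ==> (x' != x) ==> (Pn y x' < Pn y x)]].

Definition PUD (C : {set word}) : R :=
  (#|C|%:R)^-1 * \sum_(x in C) \sum_(y : word | mldec C y != Some x) Pn y x.

Definition Bin (a b : R) : R :=
  if (a \is a Num.nat) && (b \is a Num.nat)
  then ('C(Num.truncn a, Num.truncn b))%:R else 0.

Definition lam (i j : nat) (s : R) : R :=
  Bin j%:R ((i%:R * gam - s + j%:R) / (gam + 1)) *
  Bin (n - j)%:R ((s - j%:R + i%:R) / (gam + 1)).

(* Since gam > 0 (under the standing assumptions), every
   a + gam b < h has a <= truncn h and b <= truncn (h / gam), so the
   enumeration bound M below covers all of S(h). *)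
Definition Sh (h : R) : seq R :=
  let M := (Num.truncn h + Num.truncn (h / gam)).+1 in
  undup [seq s <- [seq a%:R + gam * b%:R | a <- iota 0 M, b <- iota 0 M]
        | (0 <= s) && (s < h)].

End BinaryAsymmetricChannel.

From HB Require Import structures.
From mathcomp Require Import all_boot all_order all_algebra.
From mathcomp Require Import reals exp.
From mathcomp Require Import ring lra zify.
Set Implicit Arguments. Unset Strict Implicit. Unset Printing Implicit Defensive.
Import Order.TTheory GRing.Theory Num.Theory.
Local Open Scope ring_scope.

(* Put r = q/(1-p).  Since 0 < p <= q < 1/2 we have 0 < r < 1 and
   gamma = log_r (p/(1-q)) > 0, and every transition probability factorises as
     P^n(y|x) = (1-q)^{w(y)} (1-p)^{n-w(y)} r^{delta(y,x)}.
   For a fixed output y the likelihood is thus strictly decreasing in the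
   discrepancy delta(y,x), so the ML decoder is correct at y whenever the sent
   word x is the unique codeword of least discrepancy from y.  The discrepancy
   obeys a triangle inequality and delta(x,y) = delta(y,x) + (gamma-1)(w(x)-w(y));
   together these make x the unique closest codeword as soon as
     2 delta(y,x) < delta(x,x') + (gamma-1)(w(y)-w(x))  for every codeword x' <> x,
   which both thresholds of the theorem guarantee (via delta(C), resp. the
   symmetric discrepancy hat-delta(C)).  The probability of correct decoding of
   x is then at least the P^n(.|x)-mass of the outputs y below the threshold;
   grouping these y by weight i and discrepancy s, of which there are exactly
   lambda(i, w(x), s), and grouping codewords by weight yields the bounds. *)

(* Sets Y are determined by their traces on X and on its complement, hence
   there are C(|X|,a) C(|~X|,b) sets with |Y :&: X| = a and |Y :\: X| = b. *)
Lemma card_sets_by_traces (T : finType) (X : {set T}) (a b : nat) :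
  #|[set Y : {set T} | (#|Y :&: X| == a) && (#|Y :\: X| == b)]| =
  ('C(#|X|, a) * 'C(#|~: X|, b))%N.
Proof.
rewrite -!cards_draws -cardsX.
have traces (B1 B2 : {set T}) : B1 \subset X -> B2 \subset ~: X ->
    (B1 :|: B2) :&: X = B1 /\ (B1 :|: B2) :\: X = B2.
  move=> sB1 sB2.
  have B2X : B2 :&: X = set0 by apply/eqP; rewrite setI_eq0 disjoints_subset.
  have B1X : B1 :\: X = set0 by apply/eqP; rewrite setD_eq0.
  by rewrite setIUl (setIidPl sB1) B2X setU0 setDUl B1X set0U setDE (setIidPl sB2).
set D := setX _ _.
have union_inj : {in D &, injective (fun B : {set T} * {set T} => B.1 :|: B.2)}.
  move=> [B1 B2] [B1' B2']; rewrite !inE /=.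
  move=> /andP[/andP[s1 _] /andP[s2 _]] /andP[/andP[s1' _] /andP[s2' _]] E.
  have [e1 e2] := traces _ _ s1 s2; have [e1' e2'] := traces _ _ s1' s2'.
  by congr pair; [rewrite -e1 E e1' | rewrite -e2 E e2'].
rewrite -(card_in_imset union_inj); apply: eq_card => Y; rewrite inE.
apply/idP/imsetP => [/andP[ha hb] | [[B1 B2]]].
  exists (Y :&: X, Y :\: X); last by rewrite /= setID.
  by rewrite !inE ha hb subsetIr setDE subsetIr.
rewrite !inE /= => /andP[/andP[s1 ca] /andP[s2 cb]] ->.
by have [-> ->] := traces _ _ s1 s2; rewrite ca cb.
Qed.

Lemma powR_logb (R : realType) (a b : R) :
  0 < a -> ln a != 0 -> 0 < b -> a `^ (ln b / ln a) = b.
Proof.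
by move=> a0 lna0 b0; rewrite /powR gt_eqF // divfK // lnK // posrE.
Qed.

Section Supports.
Variable n : nat.

Definition supp (y : word n) : {set 'I_n} := [set k | y k].

Lemma supp_inj : injective supp.
Proof.
move=> y1 y2 E; apply/ffunP => k.
by move/setP: E => /(_ k); rewrite !inE.
Qed.

Lemma dab11E (y x : word n) : dab true true y x = #|supp y :&: supp x|.
Proof. by apply: eq_card => k; rewrite !inE; case: (y k); case: (x k). Qed.
Lemma dab10E (y x : word n) : dab true false y x = #|supp y :\: supp x|.
Proof. by apply: eq_card => k; rewrite !inE; case: (y k); case: (x k). Qed.
Lemma dab01E (y x : word n) : dab false true y x = #|supp x :\: supp y|.
Proof. by apply: eq_card => k; rewrite !inE; case: (y k); case: (x k). Qed.

Lemma wtH_out (y x : word n) : wtH y = (dab true true y x + dab true false y x)%N.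
Proof. by rewrite dab11E dab10E cardsID. Qed.
Lemma wtH_in (y x : word n) : wtH x = (dab true true y x + dab false true y x)%N.
Proof. by rewrite dab11E dab01E setIC cardsID. Qed.

Lemma card_supp_compl (x : word n) : #|~: supp x| = (n - wtH x)%N.
Proof.
have := cardsC (supp x); rewrite card_ord /wtH /supp.
by move: #|_| #|_| => u v; lia.
Qed.

(* Given x, a word y is determined by the two sets of positions where it
   agrees with, resp. deviates from, x on its support. *)
Lemma card_words_by_dab (x : word n) (a b : nat) :
  #|[set y : word n | (dab true true y x == a) && (dab true false y x == b)]| =
  ('C(wtH x, a) * 'C(n - wtH x, b))%N.
Proof.
rewrite -card_supp_compl -[wtH x]/#|supp x| -card_sets_by_traces -(card_imset _ supp_inj).
apply: eq_card => Y; rewrite !inE; apply/imsetP/idP => [[y] | cond].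
  by rewrite inE => cond ->; rewrite -dab11E -dab10E.
have suppY : supp [ffun k => k \in Y] = Y by apply/setP => k; rewrite !inE ffunE.
by exists [ffun k => k \in Y]; rewrite // inE dab11E dab10E suppY.
Qed.

Lemma wtH_lt (y : word n) : (wtH y < n.+1)%N.
Proof. by rewrite ltnS /wtH -[X in (_ <= X)%N](card_ord n) max_card. Qed.

End Supports.

Section Discrepancy.
Variables (R : realType) (n : nat) (p q : R).
Hypothesis gam_pos : 0 < gam p q.
Local Notation g := (gam p q).

(* Contribution of one coordinate (y_k, x_k) to the discrepancy delta(y,x). *)
Definition disc_cost (a b : bool) : R :=
  if a && ~~ b then g else if ~~ a && b then 1 else 0.

Lemma card_ordR (P : pred 'I_n) :
  (#|[set k | P k]|)%:R = \sum_k (if P k then 1 else 0) :> R.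
Proof.
rewrite -sum1_card natr_sum big_mkcond /=; apply: eq_bigr => k _.
by rewrite inE; case: (P k).
Qed.

Lemma discE (y x : word n) : disc p q y x = \sum_k disc_cost (y k) (x k).
Proof.
rewrite /disc /dab !card_ordR mulr_sumr -big_split; apply: eq_bigr => k _ /=.
by rewrite /disc_cost; case: (y k); case: (x k); rewrite /= ?mulr1 ?mulr0 ?addr0 ?add0r.
Qed.

Lemma wtHE (y : word n) : (wtH y)%:R = \sum_k (if y k then 1 else 0) :> R.
Proof. exact: card_ordR. Qed.

Lemma disc_ge0 (y x : word n) : 0 <= disc p q y x.
Proof.
rewrite discE; apply: sumr_ge0 => k _; rewrite /disc_cost.
by case: (x k); case: (y k) => //=; exact: ltW.
Qed.

Lemma disc_triangle (x y z : word n) : disc p q x z <= disc p q x y + disc p q y z.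
Proof.
rewrite !discE -big_split; apply: ler_sum => k _ /=; move: gam_pos; rewrite /disc_cost.
by case: (x k); case: (y k); case: (z k) => /= ?; lra.
Qed.

Lemma disc_swap (x y : word n) :
  disc p q x y = disc p q y x + (g - 1) * ((wtH x)%:R - (wtH y)%:R).
Proof.
rewrite !discE !wtHE -sumrB mulr_sumr -big_split; apply: eq_bigr => k _ /=.
by rewrite /disc_cost; case: (x k); case: (y k) => /=; ring.
Qed.

Lemma disc_closer (x x' y : word n) :
  2 * disc p q y x < disc p q x x' + (g - 1) * ((wtH y)%:R - (wtH x)%:R) ->
  disc p q y x < disc p q y x'.
Proof.
have := disc_triangle x y x'; rewrite [disc p q x y]disc_swap !mulrBr.
move: (disc p q y x) (disc p q y x') (disc p q x x') => a b c.
by move: ((g - 1) * _) ((g - 1) * _) => u v *; lra.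
Qed.

(* Every discrepancy value has the form a + gamma b with a, b in N and thus
   belongs to S(h) as soon as it is below h. *)
Lemma disc_in_Sh (y x : word n) (h : R) :
  (disc p q y x \in Sh p q h) = (disc p q y x < h).
Proof.
rewrite /Sh mem_undup mem_filter disc_ge0 andTb.
apply/andP/idP => [[] // | dh]; split => //.
have h0 : 0 <= h by apply: le_trans (disc_ge0 y x) (ltW dh).
have d01_le : (dab false true y x <= Num.truncn h)%N.
  rewrite truncn_ge_nat //; apply: le_trans (ltW dh).
  by rewrite /disc lerDr mulr_ge0 // ltW.
have d10_le : (dab true false y x <= Num.truncn (h / g))%N.
  rewrite truncn_ge_nat; last by rewrite divr_ge0 // ltW.
  rewrite ler_pdivlMr //.
  by apply: le_trans (ltW dh); rewrite /disc mulrC lerDl.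
rewrite {1}/disc addrC.
apply: (allpairs_f (fun a b : nat => a%:R + g * b%:R)); rewrite mem_iota ltnS.
  exact: leq_trans d01_le (leq_addr _ _).
exact: leq_trans d10_le (leq_addl _ _).
Qed.

Lemma dab_of_disc (y x : word n) :
  ((wtH y)%:R * g - disc p q y x + (wtH x)%:R) / (g + 1) = (dab true true y x)%:R /\
  (disc p q y x - (wtH x)%:R + (wtH y)%:R) / (g + 1) = (dab true false y x)%:R.
Proof.
have g1 : g + 1 != 0 by rewrite gt_eqF // ltr_wpDr.
rewrite (wtH_in y x) (wtH_out y x) /disc !natrD.
by split; field.
Qed.

Lemma lam_count (x : word n) (i : nat) (s : R) :
  (#|[set y : word n | (wtH y == i) && (disc p q y x == s)]|)%:R =
  lam n p q i (wtH x) s.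
Proof.
rewrite /lam /Bin !natr_nat /=.
set A := (_ / _); set B := (_ / _).
have dabE y : wtH y = i -> disc p q y x = s ->
    A = (dab true true y x)%:R /\ B = (dab true false y x)%:R.
  by move=> wy dy; rewrite /A /B -wy -dy; exact: dab_of_disc.
have [A_nat | A_nat] := boolP (A \is a Num.nat); last first.
  rewrite mul0r; apply/eqP; rewrite pnatr_eq0 cards_eq0; apply/eqP/setP => y.
  rewrite !inE; apply/negP => /andP[/eqP wy /eqP dy].
  by have [eA _] := dabE y wy dy; rewrite eA natr_nat in A_nat.
have [B_nat | B_nat] := boolP (B \is a Num.nat); last first.
  rewrite mulr0; apply/eqP; rewrite pnatr_eq0 cards_eq0; apply/eqP/setP => y.
  rewrite !inE; apply/negP => /andP[/eqP wy /eqP dy].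
  by have [_ eB] := dabE y wy dy; rewrite eB natr_nat in B_nat.
rewrite !natrK -natrM -card_words_by_dab.
have eA := truncnK A_nat; have eB := truncnK B_nat.
congr (_%:R); apply: eq_card => y; rewrite !inE.
apply/andP/andP => [[/eqP wy /eqP dy] | [/eqP d11 /eqP d10]].
  have [e1 e2] := dabE y wy dy.
  by split; rewrite -(eqr_nat R) -?e1 -?e2 ?eA ?eB.
have g1 : g + 1 != 0 by rewrite gt_eqF // ltr_wpDr.
have AB : A + B = i%:R by rewrite /A /B; field.
have d01 : (dab false true y x)%:R = (wtH x)%:R - A :> R.
  by rewrite (wtH_in y x) natrD d11 eA; ring.
split; first by rewrite -(eqr_nat R) (wtH_out y x) natrD d11 d10 eA eB AB.
by apply/eqP; rewrite /disc d01 d10 eB /A /B; field.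
Qed.

End Discrepancy.

Section Codes.
Variables (R : realType) (n : nat).

Lemma sum_uniq_pred1 (l : seq R) (d c : R) : uniq l ->
  \sum_(s <- l | s == d) c = if d \in l then c else 0.
Proof.
move=> ul; rewrite big_const_seq -/(count_mem d l) count_uniq_mem //.
by case: (d \in l); rewrite /= ?addr0.
Qed.

Lemma minseq_dpairs_le (f : word n * word n -> R) (C : {set word n}) (x x' : word n) :
  x \in C -> x' \in C -> x != x' -> minseq [seq f u | u <- dpairs C] <= f (x, x').
Proof.
move=> xC x'C xx'; rewrite /minseq big_map; apply: ge_bigmin_seq => //.
rewrite /dpairs mem_filter xx'.
by apply: (allpairs_f (fun a b => (a, b))); rewrite mem_enum.
Qed.

Lemma sum_at_weight (y : word n) (F : nat -> R) :
  \sum_(i < n.+1 | wtH y == i) F i = F (wtH y).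
Proof.
by rewrite (big_pred1 (Ordinal (wtH_lt y))) // => i; rewrite /= eq_sym -val_eqE.
Qed.

Lemma sum_by_weight (C : {set word n}) (F : nat -> R) :
  \sum_(x in C) F (wtH x) = \sum_(j < n.+1) (WH C j)%:R * F j.
Proof.
under [RHS]eq_bigr => j _ do rewrite /WH -sum1_card natr_sum mulr_suml.
rewrite (exchange_big_dep (mem C)) /=; last by move=> j x _; rewrite inE => /andP[].
apply: eq_bigr => x xC; rewrite -sum_at_weight.
by apply: eq_big => [j | j _]; rewrite ?inE ?xC ?mul1r.
Qed.

End Codes.

Section Thresholds.
Variables (R : realType) (n : nat) (p q : R).
Hypothesis gam_pos : 0 < gam p q.
Local Notation g := (gam p q).

Lemma discC_threshold (C : {set word n}) (x y x' : word n) :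
  x \in C -> x' \in C -> x' != x ->
  disc p q y x < (discC p q C + (g - 1) * ((wtH y)%:R - (wtH x)%:R)) / 2 ->
  disc p q y x < disc p q y x'.
Proof.
move=> xC x'C x'x below; apply: (disc_closer gam_pos).
have := minseq_dpairs_le (fun u => disc p q u.1 u.2) xC x'C.
rewrite eq_sym x'x -/(discC p q C) /= => /(_ isT) discC_le.
by set u := (g - 1) * _ in below *; lra.
Qed.

Lemma sdiscC_threshold (C : {set word n}) (x y x' : word n) :
  x \in C -> x' \in C -> x' != x ->
  disc p q y x < (sdiscC p q C + (wtH y)%:R * (g - 1)) / 2 ->
  disc p q y x < disc p q y x'.
Proof.
move=> xC x'C x'x below; apply: (disc_closer gam_pos).
have := minseq_dpairs_le (fun u => sdisc p q u.1 u.2) xC x'C.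
rewrite eq_sym x'x -/(sdiscC p q C) /= /sdisc => /(_ isT) sdiscC_le.
move: below sdiscC_le; rewrite [(wtH y)%:R * _]mulrC [(wtH x)%:R * _]mulrC mulrBr.
set u := (g - 1) * (wtH y)%:R; set v := (g - 1) * (wtH x)%:R.
by lra.
Qed.

End Thresholds.

Lemma powR_sum (R : realType) (I : Type) (c : R) (s : seq I) (f : I -> R) :
  0 < c -> \prod_(k <- s) c `^ f k = c `^ (\sum_(k <- s) f k).
Proof.
move=> c0; elim: s => [|a s IH]; first by rewrite !big_nil powRr0.
by rewrite !big_cons IH powRD // (gt_eqF c0) implybT.
Qed.

Lemma powR_ltr_lt1 (R : realType) (c a b : R) :
  0 < c < 1 -> a < b -> c `^ b < c `^ a.
Proof.
move=> /andP[c0 c1] ab.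
rewrite -ltr_ln ?posrE ?powR_gt0 // !ln_powR ltr_nM2r //.
by apply: ln_lt0; rewrite c0 c1.
Qed.

Section Channel.
Variables (R : realType) (n : nat) (p q : R).
Hypotheses (hp : 0 < p) (hpq : p <= q) (hq : q < 1 / 2).
Local Notation g := (gam p q).
Local Notation r := (q / (1 - p)).

Local Ltac lra_pq := move: (hp) (hpq) (hq) => *; lra.

(* Both likelihood ratios r = q/(1-p) and p/(1-q) lie in (0,1), so gamma,
   the logarithm of the latter to base r, is positive. *)
Lemma qp_ratio_bounds : 0 < r < 1.
Proof.
have p1 : 0 < 1 - p by lra_pq.
by rewrite divr_gt0 ?ltr_pdivrMr //= ?mul1r; lra_pq.
Qed.

Lemma pq_ratio_bounds : 0 < p / (1 - q) < 1.
Proof.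
have q1 : 0 < 1 - q by lra_pq.
by rewrite divr_gt0 ?ltr_pdivrMr //= ?mul1r; lra_pq.
Qed.

Lemma gam_gt0 : 0 < g.
Proof.
have /andP[r0 r1] := qp_ratio_bounds; have /andP[s0 s1] := pq_ratio_bounds.
by rewrite /gam ltr_ndivlMr ?mul0r ln_lt0 ?r0 ?r1 ?s0 ?s1.
Qed.

Lemma ratio_pow_gam : r `^ g = p / (1 - q).
Proof.
have /andP[r0 r1] := qp_ratio_bounds; have /andP[s0 _] := pq_ratio_bounds.
by rewrite powR_logb // lt_eqF // ln_lt0 // r0 r1.
Qed.

Lemma chPE (a b : bool) :
  chP p q a b = (if a then 1 - q else 1 - p) * r `^ disc_cost p q a b.
Proof.
have q0 : 1 - q != 0 by rewrite gt_eqF //; lra_pq.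
have p0 : 1 - p != 0 by rewrite gt_eqF //; lra_pq.
have /andP[r0 _] := qp_ratio_bounds.
rewrite /disc_cost; case: a; case: b => /=; rewrite ?powRr0 ?mulr1 //.
  by rewrite ratio_pow_gam mulrC divfK.
by rewrite powRr1 ?ltW // mulrC divfK.
Qed.

Lemma PnE (y x : word n) :
  Pn p q y x = (1 - q) ^+ wtH y * (1 - p) ^+ (n - wtH y) * r `^ disc p q y x.
Proof.
have /andP[r0 _] := qp_ratio_bounds.
rewrite /Pn (eq_bigr _ (fun k _ => chPE _ _)) big_split /= powR_sum // -discE.
congr (_ * _); rewrite (bigID (fun k => y k)) /=.
rewrite (eq_bigr (fun=> 1 - q)); last by move=> k ->.
rewrite [X in _ * X](eq_bigr (fun=> 1 - p)); last by move=> k /negbTE ->.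
rewrite (eq_bigl (fun k => k \in supp y)); last by move=> k; rewrite inE.
rewrite [X in _ * X](eq_bigl (fun k => k \in ~: supp y)); last by move=> k; rewrite !inE.
by rewrite !prodr_const card_supp_compl.
Qed.

Lemma Pn_ge0 (y x : word n) : 0 <= Pn p q y x.
Proof. by apply: prodr_ge0 => k _; case: (y k); case: (x k) => /=; lra_pq. Qed.

Lemma Pn_sum1 (x : word n) : \sum_y Pn p q y x = 1.
Proof.
rewrite /Pn -(bigA_distr_bigA (fun k b => chP p q b (x k))) /=.
by apply: big1 => k _; rewrite big_bool; case: (x k) => /=; ring.
Qed.

Lemma Pn_lt_disc (y x x' : word n) :
  disc p q y x < disc p q y x' -> Pn p q y x' < Pn p q y x.
Proof.
move=> h; rewrite !PnE ltr_pM2l ?powR_ltr_lt1 ?qp_ratio_bounds //.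
by rewrite mulr_gt0 // exprn_gt0 //; lra_pq.
Qed.

Lemma mldec_closest (C : {set word n}) (x y : word n) : x \in C ->
  (forall x', x' \in C -> x' != x -> disc p q y x < disc p q y x') ->
  mldec p q C y = Some x.
Proof.
move=> xC closest; rewrite /mldec; case: pickP => [z /andP[zC /forallP Hz] | none].
  have [-> // | zx] := eqVneq z x.
  have := Hz x; rewrite xC eq_sym zx /= => lt_xz.
  by have := Pn_lt_disc (closest z zC zx); rewrite ltNge (ltW lt_xz).
have := none x; rewrite xC /= => /negbT/negP; case.
apply/forallP => x'; apply/implyP => x'C; apply/implyP => x'x.
exact: Pn_lt_disc (closest _ x'C x'x).
Qed.

Lemma sum_Sh_lam (x : word n) (i : nat) (h : R) :
  \sum_(s <- Sh p q h) r `^ s * lam n p q i (wtH x) s =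
  \sum_(y | (wtH y == i) && (disc p q y x < h)) r `^ disc p q y x.
Proof.
have gpos := gam_gt0.
have by_value s : r `^ s * lam n p q i (wtH x) s =
    \sum_(y | (wtH y == i) && (disc p q y x == s)) r `^ disc p q y x.
  rewrite -(lam_count gpos) -sum1_card natr_sum mulr_sumr.
  by apply: eq_big => [y | y]; rewrite inE // => /andP[_ /eqP ->]; rewrite mulr1.
under eq_bigr => s _ do rewrite by_value big_mkcond.
rewrite exchange_big [RHS]big_mkcond; apply: eq_bigr => y _ /=.
case: (wtH y == i) => /=; last by rewrite big1.
rewrite -big_mkcond (eq_bigl (fun s => s == disc p q y x)); last by move=> s; rewrite eq_sym.
by rewrite sum_uniq_pred1 ?undup_uniq // disc_in_Sh.
Qed.

(* Lower bound for the probability of correct decoding of a codeword of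
   weight j when decoding succeeds below the threshold H(w(y), j). *)
Definition threshold_mass (H : nat -> nat -> R) (j : nat) : R :=
  \sum_(i < n.+1) (1 - q) ^+ i * (1 - p) ^+ (n - i) *
    \sum_(s <- Sh p q (H i j)) r `^ s * lam n p q i j s.

Lemma mass_below_threshold (H : nat -> nat -> R) (x : word n) :
  \sum_(y | disc p q y x < H (wtH y) (wtH x)) Pn p q y x = threshold_mass H (wtH x).
Proof.
rewrite /threshold_mass; under [RHS]eq_bigr => i _ do rewrite sum_Sh_lam mulr_sumr.
under [RHS]eq_bigr => i _ do rewrite big_mkcond.
rewrite [LHS]big_mkcond exchange_big; apply: eq_bigr => y _.
rewrite -big_mkcond big_mkcondr (sum_at_weight y (fun i =>
  if disc p q y x < H i (wtH x) then
    (1 - q) ^+ i * (1 - p) ^+ (n - i) * r `^ disc p q y x else 0)).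
by rewrite PnE.
Qed.

Lemma PUD_le_threshold (C : {set word n}) (H : nat -> nat -> R) :
  (0 < #|C|)%N ->
  (forall x y x', x \in C -> x' \in C -> x' != x ->
     disc p q y x < H (wtH y) (wtH x) -> disc p q y x < disc p q y x') ->
  PUD p q C <= 1 - (#|C|%:R)^-1 * \sum_(j < n.+1) (WH C j)%:R * threshold_mass H j.
Proof.
move=> C0 success.
have fail_le x : x \in C ->
    \sum_(y | mldec p q C y != Some x) Pn p q y x <= 1 - threshold_mass H (wtH x).
  move=> xC; have := Pn_sum1 x.
  rewrite (bigID (fun y => mldec p q C y != Some x)) /= => <-.
  rewrite -mass_below_threshold -addrA lerDl subr_ge0.
  rewrite big_mkcond [X in _ <= X]big_mkcond; apply: ler_sum => y _.
  case: ifP => [below | _]; last by case: ifP => _; rewrite ?Pn_ge0.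
  by rewrite (mldec_closest xC (fun x' x'C x'x => success x y x' xC x'C x'x below)) eqxx.
have C0R : (#|C|%:R : R) != 0 by rewrite pnatr_eq0 -lt0n.
rewrite /PUD -sum_by_weight.
apply: le_trans (ler_wpM2l _ (ler_sum _ fail_le)) _; first by rewrite invr_ge0.
by rewrite sumrB sumr_const mulrBr mulVf.
Qed.

End Channel.

Theorem mainTheorem9 (R : realType) (n : nat) (p q : R)
    (C : {set word n})
    (hn : (2 <= n)%N) (hp : 0 < p) (hpq : p <= q) (hq : q < 1 / 2)
    (hC : (2 <= #|C|)%N) :
  PUD p q C <=
    1 - (#|C|%:R)^-1 *
      \sum_(j < n.+1) (WH C j)%:R *
        \sum_(i < n.+1) (1 - q) ^+ i * (1 - p) ^+ (n - i) *
          \sum_(s <- Sh p q ((discC p q C + (gam p q - 1) * (i%:R - j%:R)) / 2))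
             (q / (1 - p)) `^ s * lam n p q i j s
  /\
  PUD p q C <=
    1 - (#|C|%:R)^-1 *
      \sum_(j < n.+1) (WH C j)%:R *
        \sum_(i < n.+1) (1 - q) ^+ i * (1 - p) ^+ (n - i) *
          \sum_(s <- Sh p q ((sdiscC p q C + i%:R * (gam p q - 1)) / 2))
             (q / (1 - p)) `^ s * lam n p q i j s.
Proof.
have C0 : (0 < #|C|)%N by apply: leq_trans hC.
have gpos := gam_gt0 hp hpq hq.
split.
  exact: (@PUD_le_threshold _ _ _ _ hp hpq hq C
    (fun i j => (discC p q C + (gam p q - 1) * (i%:R - j%:R)) / 2) C0
    (fun x y x' xC x'C x'x => discC_threshold gpos xC x'C x'x)).
exact: (@PUD_le_threshold _ _ _ _ hp hpq hq C
  (fun i j => (sdiscC p q C + i%:R * (gam p q - 1)) / 2) C0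
  (fun x y x' xC x'C x'x => sdiscC_threshold gpos xC x'C x'x)).
Qed.
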